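(* Let $\mathbb{K}=(G,M,I)$ be a finite formal context with concept lattice $\underline{\mathfrak{B}}(\mathbb{K})$ and let $\underline{S}=\{s\}$ be an interval of $\underline{\mathfrak{B}}(\mathbb{K})$ with $|\underline{S}|=1$. Then $\underline{S}$ is quasi-dismantling for $\underline{\mathfrak{B}}(\mathbb{K})$ if and only if one of the following holds: $s$ is doubly irreducible; or $s=\top$ and $s$ is supremum-irreducible; or $s=\bot$ and $s$ is infimum-irreducible; or $s=\top=\bot$.
   Context: For $u\le v$ in a lattice $L$, $[u,v]=\{x\mid u\le x\le v\}$, $(v]=\{x\mid x\le v\}$, $[u)=\{x\mid u\le x\}$. An interval $[u,v]$ of $L$ is quasi-dismantling for $L$ if $u$ is supremum-prime in $(v]$ (for all $x,y\in(v]$, $u\le x\vee y$ implies $u\le x$ or $u\le y$) and $v$ is infimum-prime in $[u)$ (for all $x,y\in[u)$, $x\wedge y\le v$ implies $x\le v$ or $y\le v$). An element of a finite lattice is supremum-irreducible if it has exactly one lower neighbor, infimum-irreducible if it has exactly one upper neighbor, doubly irreducible if both. $\top,\bot$ denote the greatest and least elements of $\underline{\mathfrak{B}}(\mathbb{K})$. The concept lattice is the set of formal concepts $(A,B)$ ($A'=B$, $B'=A$) ordered by inclusion of extents. *)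

From mathcomp Require Import all_boot.
Set Implicit Arguments. Unset Strict Implicit. Unset Printing Implicit Defensive.

Section Concepts.
Variables (G M : finType) (I : G -> M -> bool).

Definition intent (A : {set G}) : {set M} := [set m | [forall g in A, I g m]].
Definition extent (B : {set M}) : {set G} := [set g | [forall m in B, I g m]].

Definition is_concept (p : {set G} * {set M}) : bool :=
  (intent p.1 == p.2) && (extent p.2 == p.1).

Definition concept := {p : {set G} * {set M} | is_concept p}.

Lemma extent_intentA (A : {set G}) : A \subset extent (intent A).
Proof.
apply/subsetP=> g gA; rewrite inE; apply/forallP=> m; apply/implyP.
by rewrite inE => /forallP/(_ g)/implyP; apply.
Qed.

Lemma intent_extentB (B : {set M}) : B \subset intent (extent B).
Proof.
apply/subsetP=> m mB; rewrite inE; apply/forallP=> g; apply/implyP.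
by rewrite inE => /forallP/(_ m)/implyP; apply.
Qed.

Lemma intent_anti (A1 A2 : {set G}) : A1 \subset A2 -> intent A2 \subset intent A1.
Proof.
move=> /subsetP sA; apply/subsetP=> m; rewrite !inE => /forallP H.
apply/forallP=> g; apply/implyP=> gA; exact: (implyP (H g) (sA g gA)).
Qed.

Lemma closure_is_concept (A : {set G}) :
  is_concept (extent (intent A), intent A).
Proof.
rewrite /is_concept /= eqxx andbT eqEsubset intent_extentB andbT.
exact: intent_anti (extent_intentA A).
Qed.

Definition closure (A : {set G}) : concept :=
  exist _ (extent (intent A), intent A) (closure_is_concept A).

Definition cle (c d : concept) : bool := (val c).1 \subset (val d).1.
Definition clt (c d : concept) : bool := (c != d) && cle c d.

Definition cmeet (c d : concept) : concept := closure ((val c).1 :&: (val d).1).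
Definition cjoin (c d : concept) : concept := closure ((val c).1 :|: (val d).1).

Definition is_top (s : concept) : Prop := forall c, cle c s.
Definition is_bot (s : concept) : Prop := forall c, cle s c.

Definition cinterval (u v : concept) : {set concept} :=
  [set x | cle u x && cle x v].

Definition sup_prime_below (u v : concept) : Prop :=
  forall x y, cle x v -> cle y v -> cle u (cjoin x y) -> cle u x \/ cle u y.
Definition inf_prime_above (u v : concept) : Prop :=
  forall x y, cle u x -> cle u y -> cle (cmeet x y) v -> cle x v \/ cle y v.
Definition quasi_dismantling (u v : concept) : Prop :=
  sup_prime_below u v /\ inf_prime_above u v.

Definition lower_cover (y x : concept) : bool :=
  clt y x && ~~ [exists z, clt y z && clt z x].
Definition sup_irreducible (x : concept) : Prop :=
  #|[set y | lower_cover y x]| = 1.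
Definition inf_irreducible (x : concept) : Prop :=
  #|[set y | lower_cover x y]| = 1.
Definition doubly_irreducible (x : concept) : Prop :=
  sup_irreducible x /\ inf_irreducible x.

End Concepts.

(* A one-element interval is [s, s], and it is quasi-dismantling iff s is
   supremum-prime in (s] and infimum-prime in [s).  In a finite lattice, s is
   supremum-prime in (s] iff s has at most one lower cover: two distinct lower
   covers join to s, and conversely every x < s lies below some lower cover of
   s.  Likewise s is the bottom iff it has no lower cover, and dually for
   upper covers, meets and the top.  The four cases of the statement are what
   remains of "at most one lower and at most one upper cover" once the counts
   0 and 1 are read as bottom/top and irreducibility. *)
From mathcomp Require Import all_boot.
Set Implicit Arguments. Unset Strict Implicit. Unset Printing Implicit Defensive.

Section FiniteOrder.
Variables (T : finType) (le : rel T).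
Hypotheses (le_refl : reflexive le) (le_anti : antisymmetric le)
  (le_trans : forall y x z, le x y -> le y z -> le x z).

Definition strict x y := (x != y) && le x y.
Definition lcover y x := strict y x && ~~ [exists z, strict y z && strict z x].

Lemma strict_of_le_nge x y : le x y -> ~~ le y x -> strict x y.
Proof.
move=> xy nyx; rewrite /strict xy andbT.
by apply: contraNneq nyx => ->; rewrite le_refl.
Qed.

Lemma strict_nge x y : strict x y -> ~~ le y x.
Proof.
case/andP=> nxy xy; apply: contra nxy => yx.
by apply/eqP/le_anti; rewrite xy yx.
Qed.

Lemma strict_le x y : strict x y -> le x y.
Proof. by case/andP. Qed.

Lemma lcover_strict y x : lcover y x -> strict y x.
Proof. by case/andP. Qed.

Lemma lcover_between a x z : lcover a x -> le a z -> le z x -> z = a \/ z = x.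
Proof.
case/andP=> _ /existsPn /(_ z) nz az zx.
have [-> | nza] := eqVneq z a; first by left.
have [-> | nzx] := eqVneq z x; first by right.
by move: nz; rewrite /strict eq_sym nza az nzx zx.
Qed.

(* Take c with z <= c < x having the most elements below it. *)
Lemma exists_lcover_above z x : strict z x -> exists2 c, lcover c x & le z c.
Proof.
move=> zx; have Pz : strict z x && le z z by rewrite zx le_refl.
have [c /andP[cx zc] cmax] :=
  @arg_maxnP T z (fun w => strict w x && le z w) (fun w => #|[set t | le t w]|) Pz.
exists c => //; rewrite /lcover cx /=.
apply/existsP=> -[t /andP[ct tx]].
have := cmax t; rewrite tx (le_trans zc (proj2 (andP ct))) => /(_ isT).
apply/negP; rewrite -ltnNge; apply: proper_card; rewrite properE.
apply/andP; split.
  by apply/subsetP=> w; rewrite !inE => /le_trans; apply; case/andP: ct.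
apply/subsetPn; exists t; first by rewrite inE le_refl.
by rewrite inE; apply: strict_nge.
Qed.

Section Join.
Variable join : T -> T -> T.
Hypotheses (join_l : forall x y, le x (join x y))
  (join_r : forall x y, le y (join x y))
  (join_lub : forall x y z, le x z -> le y z -> le (join x y) z).

Definition sup_prime_in_downset x :=
  forall y z, le y x -> le z x -> le x (join y z) -> le x y \/ le x z.

Lemma join_lcovers a b x : lcover a x -> lcover b x -> a != b -> join a b = x.
Proof.
move=> ax bx nab; have [ax_lt bx_lt] := (lcover_strict ax, lcover_strict bx).
have jx : le (join a b) x by apply: join_lub; apply: strict_le.
case: (lcover_between ax (join_l a b) jx) => [jab | //].
have ba : le b a by rewrite -jab join_r.
case: (lcover_between bx ba (strict_le ax_lt)) => [ab | ax'].
  by rewrite ab eqxx in nab.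
by move: ax_lt; rewrite ax' /strict eqxx.
Qed.

Lemma sup_primeP x : sup_prime_in_downset x <-> #|[set y | lcover y x]| <= 1.
Proof.
split=> [xprime | le1].
  apply/card_le1_eqP=> a b; rewrite !inE => ax bx.
  apply/eqP; apply: contraT; rewrite eq_sym => nab.
  have [ax_lt bx_lt] := (lcover_strict ax, lcover_strict bx).
  have := xprime a b (strict_le ax_lt) (strict_le bx_lt).
  rewrite (join_lcovers ax bx nab) le_refl => /(_ isT).
  by case=> [xa | xb]; [move: (strict_nge ax_lt) | move: (strict_nge bx_lt)];
    rewrite ?xa ?xb.
move=> y z yx zx xyz.
have [xy | nxy] := boolP (le x y); first by left.
have [xz | nxz] := boolP (le x z); first by right.
have [c cx yc] := exists_lcover_above (strict_of_le_nge yx nxy).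
have [d dx zd] := exists_lcover_above (strict_of_le_nge zx nxz).
have cd : c = d by apply: (card_le1_eqP le1); rewrite inE.
subst d; have /strict_nge/negP[] := lcover_strict cx.
exact: le_trans xyz (join_lub yc zd).
Qed.

End Join.

Section Meet.
Variable meet : T -> T -> T.
Hypotheses (meet_l : forall x y, le (meet x y) x)
  (meet_r : forall x y, le (meet x y) y).

Lemma bottomP x : (forall y, le x y) <-> #|[set y | lcover y x]| = 0.
Proof.
split=> [xbot | no_lcover].
  apply/eqP; rewrite cards_eq0; apply/eqP/setP=> y; rewrite !inE.
  by apply/negP=> /andP[/strict_nge]; rewrite xbot.
move=> y; apply: contraT => nxy.
have mx : strict (meet x y) x.
  apply: strict_of_le_nge (meet_l x y) _.
  by apply: contra nxy => /le_trans; apply.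
have [c cx _] := exists_lcover_above mx.
by move/eqP: no_lcover; rewrite cards_eq0 => /eqP/setP/(_ c); rewrite !inE cx.
Qed.

End Meet.
End FiniteOrder.

Section ConceptLattice.
Variables (G M : finType) (I : G -> M -> bool).
Implicit Types (c s u v x y z : concept I).

Lemma extent_anti (B1 B2 : {set M}) :
  B1 \subset B2 -> extent I B2 \subset extent I B1.
Proof.
move=> /subsetP sB; apply/subsetP=> g; rewrite !inE => /forallP gB.
by apply/forallP=> m; apply/implyP=> /sB; apply: (implyP (gB m)).
Qed.

Lemma closure_mono (A1 A2 : {set G}) :
  A1 \subset A2 -> extent I (intent I A1) \subset extent I (intent I A2).
Proof. by move=> sA; apply/extent_anti/intent_anti. Qed.

Lemma concept_intentE c : (val c).2 = intent I (val c).1.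
Proof. by case: c => [[A B]] /= /andP[/eqP ->]. Qed.

Lemma concept_extentK c : extent I (intent I (val c).1) = (val c).1.
Proof. by case: c => [[A B]] /= /andP[/eqP -> /eqP ->]. Qed.

Lemma cle_refl : reflexive (@cle _ _ I).
Proof. by move=> c; apply: subxx. Qed.

Lemma cle_trans y x z : cle x y -> cle y z -> cle x z.
Proof. exact: subset_trans. Qed.

Lemma cle_anti : antisymmetric (@cle _ _ I).
Proof.
move=> c d /andP[cd dc]; apply: val_inj.
have e1 : (val c).1 = (val d).1 by apply/eqP; rewrite eqEsubset; apply/andP.
by rewrite [val c]surjective_pairing [val d]surjective_pairing
  !concept_intentE e1.
Qed.

Lemma cjoin_l x y : cle x (cjoin x y).
Proof. exact: subset_trans (subsetUl _ _) (extent_intentA I _). Qed.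

Lemma cjoin_r x y : cle y (cjoin x y).
Proof. exact: subset_trans (subsetUr _ _) (extent_intentA I _). Qed.

Lemma cjoin_lub x y z : cle x z -> cle y z -> cle (cjoin x y) z.
Proof.
move=> xz yz; rewrite /cle -(concept_extentK z) closure_mono //.
by rewrite subUset; apply/andP.
Qed.

Lemma cmeet_l x y : cle (cmeet x y) x.
Proof. by rewrite /cle /= -{2}(concept_extentK x) closure_mono ?subsetIl. Qed.

Lemma cmeet_r x y : cle (cmeet x y) y.
Proof. by rewrite /cle /= -{2}(concept_extentK y) closure_mono ?subsetIr. Qed.

Lemma cmeet_glb x y z : cle z x -> cle z y -> cle z (cmeet x y).
Proof.
move=> zx zy; apply: subset_trans (extent_intentA I _).
by rewrite subsetI; apply/andP.
Qed.

Definition cge x y := cle y x.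

Lemma cge_refl : reflexive cge.
Proof. exact: cle_refl. Qed.

Lemma cge_anti : antisymmetric cge.
Proof. by move=> x y; rewrite andbC; apply: cle_anti. Qed.

Lemma cge_trans y x z : cge x y -> cge y z -> cge x z.
Proof. by move=> xy yz; apply: cle_trans xy. Qed.

Lemma upper_covers_cge x :
  [set y | lower_cover x y] = [set y | lcover cge y x].
Proof.
apply: eq_finset => y; rewrite /lower_cover /lcover /clt /strict /cge eq_sym.
congr (_ && ~~ _).
by apply: eq_existsb => z; rewrite andbC eq_sym [z == x]eq_sym.
Qed.

Lemma sup_prime_below_selfP s :
  sup_prime_below s s <-> #|[set y | lower_cover y s]| <= 1.
Proof. exact: (sup_primeP cle_refl cle_anti cle_trans cjoin_l cjoin_r cjoin_lub). Qed.

Lemma inf_prime_above_selfP s :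
  inf_prime_above s s <-> #|[set y | lower_cover s y]| <= 1.
Proof.
rewrite upper_covers_cge.
exact: (sup_primeP cge_refl cge_anti cge_trans cmeet_l cmeet_r cmeet_glb).
Qed.

Lemma is_botP s : is_bot s <-> #|[set y | lower_cover y s]| = 0.
Proof. exact: (bottomP cle_refl cle_anti cle_trans cmeet_l cmeet_r). Qed.

Lemma is_topP s : is_top s <-> #|[set y | lower_cover s y]| = 0.
Proof.
rewrite upper_covers_cge.
exact: (bottomP cge_refl cge_anti cge_trans cjoin_l cjoin_r).
Qed.

Lemma cinterval_set1 u v s : cle u v -> cinterval u v = [set s] -> u = s /\ v = s.
Proof.
move=> uv uvs; have: u \in cinterval u v /\ v \in cinterval u v.
  by rewrite !inE !cle_refl uv.
by rewrite uvs !inE => -[/eqP -> /eqP ->].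
Qed.

End ConceptLattice.

Lemma at_most_one_cover_cases (Down Up Top Bot : Prop) (L U : nat) :
  (Down <-> L <= 1) -> (Up <-> U <= 1) -> (Bot <-> L = 0) -> (Top <-> U = 0) ->
  (Down /\ Up <->
     (L = 1 /\ U = 1) \/ (Top /\ L = 1) \/ (Bot /\ U = 1) \/ (Top /\ Bot)).
Proof.
move=> [downL Ldown] [upU Uup] [botL Lbot] [topU Utop]; split.
  case=> /downL + /upU; clear Ldown Uup downL upU botL topU.
  by case: L Lbot => [|[|L]] Lbot //; case: U Utop => [|[|U]] Utop //; intuition.
move=> cases; split; [apply: Ldown | apply: Uup];
  case: cases => [[eL eU]|[[/topU eU eL]|[[/botL eL eU]|[/topU eU /botL eL]]]];
  by rewrite ?eL ?eU.
Qed.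

Theorem proposition3 (G M : finType) (I : G -> M -> bool)
    (u v s : concept I) :
  cle u v -> cinterval u v = [set s] ->
  quasi_dismantling u v <->
    (doubly_irreducible s
     \/ (is_top s /\ sup_irreducible s)
     \/ (is_bot s /\ inf_irreducible s)
     \/ (is_top s /\ is_bot s)).
Proof.
move=> uv /(cinterval_set1 uv) [-> ->].
exact: at_most_one_cover_cases (sup_prime_below_selfP s)
  (inf_prime_above_selfP s) (is_botP s) (is_topP s).
Qed.
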